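(* Let $X$ be a fibrewise locally equiconnected space over $B$ and let $f:X\to[0,1]$ be a continuous map such that $A:=f^{-1}(\{0\})$ is a fibrewise retract of $f^{-1}([0,1))$. Then $(X,A)$ is a closed fibrewise cofibred pair.
   Context: A fibrewise space over $B$ is a space $X$ with $p_X:X\to B$; subsets carry the restricted projection; fibrewise maps satisfy $p_Y\circ f=p_X$. $A\subseteq V$ is a fibrewise retract of $V$ if there is a fibrewise map $r:V\to A$ with $r|_A=1_A$. A fibrewise cofibration is a fibrewise map with the homotopy extension property with respect to fibrewise maps and fibrewise homotopies (homotopies $H$ with $p(H(x,t))=p(x)$); closed if also a closed embedding. $(X,A)$ is a closed fibrewise cofibred pair if the inclusion $A\hookrightarrow X$ is a closed fibrewise cofibration. $X$ is fibrewise locally equiconnected if the diagonal $X\to X\times_BX=\{(x,y):p_X(x)=p_X(y)\}$ is a closed fibrewise cofibration. *)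

From HB Require Import structures.
From mathcomp Require Import all_boot all_order all_algebra.
From mathcomp Require Import all_classical all_reals all_analysis.
Import numFieldNormedType.Exports.
Set Implicit Arguments. Unset Strict Implicit. Unset Printing Implicit Defensive.
Import Order.TTheory GRing.Theory Num.Theory.
Local Open Scope classical_set_scope.
Local Open Scope ring_scope.

(* The unit interval [0,1] of a real type, as a set and (via set_type, which
   carries the subspace topology) as a topological space. *)
Definition unit_interval (R : realType) : set R := `[0, 1].

Definition fibrewise {B X Y : Type} (pX : X -> B) (pY : Y -> B) (f : X -> Y) :=
  forall x, pY (f x) = pX x.

Definition fibrewise_homotopy (R : realType) {B : Type} {X Y : topologicalType}
  (pX : X -> B) (pY : Y -> B) (H : X * set_type (@unit_interval R) -> Y) :=
  continuous H /\ forall x t, pY (H (x, t)) = pX x.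

Definition fibrewise_cofibration (R : realType) {B A X : topologicalType}
  (pA : A -> B) (pX : X -> B) (i : A -> X) : Prop :=
  [/\ continuous i, fibrewise pA pX i &
    forall (Y : topologicalType) (pY : Y -> B), continuous pY ->
    forall (g : X -> Y) (h : A * set_type (@unit_interval R) -> Y),
      continuous g -> fibrewise pX pY g ->
      fibrewise_homotopy pA pY h ->
      (forall a t, set_val t = 0 -> h (a, t) = g (i a)) ->
      exists H : X * set_type (@unit_interval R) -> Y,
        [/\ fibrewise_homotopy pX pY H,
            (forall x t, set_val t = 0 -> H (x, t) = g x) &
            (forall a t, H (i a, t) = h (a, t))]].

Definition closed_embedding {A X : topologicalType} (i : A -> X) : Prop :=
  [/\ continuous i, injective i & forall C : set A, closed C -> closed (i @` C)].

Definition closed_fibrewise_cofibration (R : realType) {B A X : topologicalType}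
  (pA : A -> B) (pX : X -> B) (i : A -> X) : Prop :=
  closed_embedding i /\ fibrewise_cofibration R pA pX i.

Definition closed_fibrewise_cofibred_pair (R : realType) {B X : topologicalType}
  (pX : X -> B) (A : set X) : Prop :=
  closed_fibrewise_cofibration R (fun a : set_type A => pX (set_val a)) pX set_val.

Definition fibprod {B X : Type} (pX : X -> B) : set (X * X) :=
  [set p | pX p.1 = pX p.2].

Definition fibprod_proj {B X : topologicalType} (pX : X -> B)
  (p : set_type (fibprod pX)) : B := pX (set_val p).1.

Lemma diag_in_fibprod {B X : Type} (pX : X -> B) (x : X) : (x, x) \in fibprod pX.
Proof. by apply/mem_set. Qed.

Definition fib_diagonal {B X : topologicalType} (pX : X -> B) (x : X)
  : set_type (fibprod pX) := exist _ (x, x) (diag_in_fibprod pX x).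

Definition fibrewise_LEC (R : realType) {B X : topologicalType} (pX : X -> B) :=
  closed_fibrewise_cofibration R pX (@fibprod_proj B X pX) (@fib_diagonal B X pX).

Definition fibrewise_retract {B X : topologicalType} (pX : X -> B) (A V : set X) :=
  A `<=` V /\
  exists r : set_type V -> set_type A,
    [/\ continuous r,
        (forall v, pX (set_val (r v)) = pX (set_val v)) &
        (forall v, A (set_val v) -> set_val (r v) = set_val v)].

(* The proof follows Strom's approach to cofibrations, in three stages.
   1. Fibrewise Strom theorem: a closed subspace A with a fibrewise NDR
      presentation (phi, D) -- phi vanishing on A, D a fibrewise deformation
      of X fixing A and pushing x into A at every time t > phi x -- is a
      closed fibrewise cofibred pair, because (x, t) |-> (D x t, t - phi x)
      retracts X x I onto X x 0 u A x I.
   2. Diagonal halo: as the diagonal of X is a fibrewise cofibration, the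
      homotopy (x, t) |-> (Delta x, t) extends to X x_B X inside
      (X x_B X) x 0 u Delta x I, which yields a deformation of X x_B X that
      reaches the diagonal wherever an accompanying level function is > 0.
   3. Composing the halo with x |-> (x, r x), r the retraction onto A, gives
      paths from x to r x for x near A; reparametrising them by cut-off
      functions built from f and the halo level gives an NDR presentation of
      (X, A). *)

From HB Require Import structures.
From mathcomp Require Import all_boot all_order all_algebra.
From mathcomp Require Import all_classical all_reals all_analysis.
From mathcomp Require Import lra.
Import numFieldNormedType.Exports.
Import Order.TTheory GRing.Theory Num.Theory.
Local Open Scope classical_set_scope.
Local Open Scope ring_scope.

Section continuity_tools.
Context {T U V : topologicalType}.

Lemma continuous_pair_at (f : T -> U) (g : T -> V) x :
  {for x, continuous f} -> {for x, continuous g} ->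
  {for x, continuous (fun y => (f y, g y))}.
Proof. by move=> cf cg; apply: cvg_pair. Qed.

Lemma continuous_fst : continuous (@fst U V).
Proof. by move=> p; apply: cvg_fst. Qed.

Lemma continuous_snd : continuous (@snd U V).
Proof. by move=> p; apply: cvg_snd. Qed.

Lemma continuous_set_val (A : set U) : continuous (@set_val U A).
Proof. exact: initial_continuous. Qed.

Lemma continuous_into_subspace (A : set U) (f : T -> set_type A) x :
  {for x, continuous (set_val \o f)} -> {for x, continuous f}.
Proof.
move=> cf W [C] [] [C' oC' <-] Cfx CW; apply: (filterS CW); apply: cf.
exact: open_nbhs_nbhs.
Qed.

Lemma continuous_at_near_eq (f g : T -> U) x :
  (\forall y \near x, g y = f y) -> {for x, continuous f} ->
  {for x, continuous g}.
Proof.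
move=> e cf; have ex : g x = f x := nbhs_singleton e.
rewrite /prop_for /continuous_at ex.
by apply: cvg_trans cf; apply: near_eq_cvg; apply: filterS e => y ->.
Qed.

Lemma continuous_at_paste (g f1 f2 : T -> U) x :
  {for x, continuous f1} -> {for x, continuous f2} ->
  f1 x = g x -> f2 x = g x -> (forall y, g y = f1 y \/ g y = f2 y) ->
  {for x, continuous g}.
Proof.
move=> c1 c2 e1 e2 h N Ngx.
have n1 : nbhs x (f1 @^-1` N) by apply: c1; rewrite e1.
have n2 : nbhs x (f2 @^-1` N) by apply: c2; rewrite e2.
by apply: filterS (filterI n1 n2) => y [a b] /=; case: (h y) => ->.
Qed.

Lemma nbhs_subspace_open {A : set U} {a : set_type A} {W : set (set_type A)} :
  nbhs a W -> exists O : set U,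
    [/\ open O, O (set_val a) & forall b, O (set_val b) -> W b].
Proof. by move=> [C] [] [C' oC' <-] Ca CW; exists C'; split => // b /CW. Qed.

Lemma nbhs_prod_rect {p : U * V} {W : set (U * V)} : nbhs p W ->
  exists W1 W2,
    [/\ nbhs p.1 W1, nbhs p.2 W2 & forall a b, W1 a -> W2 b -> W (a, b)].
Proof.
by case=> -[W1 W2] /= [n1 n2] sub; exists W1, W2; split => // a b h1 h2; apply: sub.
Qed.

Lemma nbhs_prod_of (p : U * V) {W1 : set U} {W2 : set V} :
  nbhs p.1 W1 -> nbhs p.2 W2 -> nbhs p [set q | W1 q.1 /\ W2 q.2].
Proof. by move=> n1 n2; exists (W1, W2) => //= -[a b]. Qed.

End continuity_tools.

Lemma continuous_at_if_le {R : realType} {T U : topologicalType}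
    (c : T -> R) (f1 f2 : T -> U) (thr : R) x :
  {for x, continuous c} -> {for x, continuous f1} -> {for x, continuous f2} ->
  (c x = thr -> f1 x = f2 x) ->
  {for x, continuous (fun y => if c y <= thr then f1 y else f2 y)}.
Proof.
move=> cc c1 c2 e.
have [lt|gt|eq] := ltgtP (c x) thr.
- apply: (continuous_at_near_eq f1) c1.
  have c_lt : \forall y \near x, c y < thr := cc _ (lt_nbhsl lt).
  by apply: filterS c_lt => y /ltW ->.
- apply: (continuous_at_near_eq f2) c2.
  have c_gt : \forall y \near x, thr < c y := cc _ (lt_nbhsr gt).
  by apply: filterS c_gt => y; rewrite leNgt => ->.
- apply: (continuous_at_paste _ f1 f2 x c1 c2); first by rewrite eq lexx.
    by rewrite eq lexx e.
  by move=> y; case: (c y <= thr); [left | right].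
Qed.

Section unit_interval.
Context {R : realType}.
Local Notation I := (set_type (@unit_interval R)).

Lemma unit_valP (t : I) : 0 <= set_val t <= 1.
Proof. by have := set_valP t; rewrite /unit_interval /= itv_boundlr. Qed.

Lemma unit_val_ge0 (t : I) : 0 <= set_val t.
Proof. by case/andP: (unit_valP t). Qed.

Lemma unit_val_le1 (t : I) : set_val t <= 1.
Proof. by case/andP: (unit_valP t). Qed.

Lemma unit_val_inj (s t : I) : set_val s = set_val t -> s = t.
Proof. by move=> e; apply: eq_sig_hprop. Qed.

Definition clampR (r : R) : R := Num.min 1 (Num.max 0 r).

Lemma clampR_in (r : R) : clampR r \in @unit_interval R.
Proof.
have r01 : 0 <= clampR r <= 1.
  by rewrite /clampR; apply/andP; split; [rewrite le_min ler01 le_max lexx | rewrite ge_min lexx].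
by apply: mem_set; rewrite /unit_interval /= itv_boundlr.
Qed.

Definition clamp (r : R) : I := exist _ (clampR r) (clampR_in r).

Lemma val_clamp (r : R) : set_val (clamp r) = clampR r.
Proof. by []. Qed.

Lemma clampE (r : R) : 0 <= r <= 1 -> set_val (clamp r) = r.
Proof. by case/andP=> h0 h1; rewrite val_clamp /clampR (max_idPr h0) (min_idPr h1). Qed.

Lemma clamp_le0 (r : R) : r <= 0 -> set_val (clamp r) = 0.
Proof. by move=> h; rewrite val_clamp /clampR (max_idPl h) (min_idPr ler01). Qed.

Lemma clamp_ge1 (r : R) : 1 <= r -> set_val (clamp r) = 1.
Proof.
by move=> h; rewrite val_clamp /clampR (max_idPr (le_trans ler01 h)) (min_idPl h).
Qed.

Lemma clamp_val (t : I) : clamp (set_val t) = t.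
Proof. by apply: unit_val_inj; rewrite clampE // unit_valP. Qed.

Lemma clamp_pos (r : R) : 0 < set_val (clamp r) -> 0 < r.
Proof. by apply: contraTT; rewrite -!leNgt => /clamp_le0 ->. Qed.

Lemma continuous_clampR : continuous clampR.
Proof.
move=> x; apply: continuous_min; first exact: cvg_cst.
by apply: continuous_max; [exact: cvg_cst | exact: cvg_id].
Qed.

Lemma continuous_clamp : continuous clamp.
Proof. by move=> x; apply: continuous_into_subspace; exact: continuous_clampR. Qed.

End unit_interval.

(* Tube lemma: if a family of paths [P x] is jointly continuous along
   {a} x I and constant at the parameter a, then for x near a the whole path
   [P x] lies in any prescribed neighbourhood of that constant (I is compact). *)
Section tube.
Context {R : realType} {T Y : topologicalType}.
Local Notation I := (set_type (@unit_interval R)).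

Lemma tube_lemma (P : T -> I -> Y) (a : T) (y0 : Y) :
  (forall s, P a s = y0) ->
  (forall s, {for (a, s), continuous (fun p => P p.1 p.2)}) ->
  forall N, nbhs y0 N -> \forall x \near a, forall s, N (P x s).
Proof.
move=> Pa cP N nN.
have cpt : compact (@unit_interval R) by exact: segment_compact.
have cover : forall r, @unit_interval R r ->
    \forall r' \near r & x \near a, N (P x (clamp r')).
  move=> r _.
  have cPr : {for (r, a), continuous (fun q : R * T => P q.2 (clamp q.1))}.
    apply: (@continuous_comp _ _ _ (fun q : R * T => (q.2, clamp q.1))
              (fun p => P p.1 p.2)); last exact: cP.
    apply: continuous_pair_at; first exact: continuous_snd.
    apply: continuous_comp; [exact: continuous_fst | exact: continuous_clamp].
  by apply: cPr; rewrite /= Pa.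
have := (compact_near_coveringP _).1 cpt T (nbhs a)
   (fun x r => N (P x (clamp r))) _.
move=> /(_ _ cover); apply: filterS => x Nx s; rewrite -(clamp_val s); apply: Nx.
by have := unit_valP s; rewrite /unit_interval /= itv_boundlr.
Qed.

End tube.

Lemma closed_embedding_set_val {X : topologicalType} (A : set X) :
  closed A -> closed_embedding (@set_val X A).
Proof.
move=> cA; split; first exact: continuous_set_val.
  by move=> a b e; apply: eq_sig_hprop => // *; exact: Prop_irrelevance.
move=> C cC; have : open (~` C) by rewrite openC.
case=> O oO eO.
have -> : set_val @` C = A `&` ~` O.
  apply/seteqP; split.
    move=> x [c Cc <-]; split; first exact: set_valP.
    by move=> Ox; have : (~` C) c by rewrite -eO.
  move=> x [Ax nOx]; exists (exist _ x (mem_set Ax)) => //.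
  apply: contrapT => nC.
  by have : (set_val @^-1` O) (exist _ x (mem_set Ax)) by rewrite eO.
by apply: closedI => //; exact: open_closedC.
Qed.

(* This is the fibrewise form of Strom's characterisation of
   cofibrations. *)
Definition fibrewise_NDR {R : realType} {B X : topologicalType} (pX : X -> B)
    (A : set X) (phi : X -> R) (D : X -> set_type (@unit_interval R) -> X) :=
  [/\ continuous phi, (forall x, 0 <= phi x) & (forall a, A a -> phi a = 0)] /\
  [/\ continuous (fun p : X * set_type (@unit_interval R) => D p.1 p.2),
      (forall x t, pX (D x t) = pX x), (forall x t, set_val t = 0 -> D x t = x),
      (forall a t, A a -> D a t = a) &
      (forall x t, phi x < set_val t -> A (D x t))].

(* Strom's construction: given a fibrewise NDR presentation, data g on X x 0
   and h on A x I are glued into a map on T := X x 0 u A x I, and extended to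
   X x I by precomposing with the retraction (x, t) |-> (D x t, t - phi x) of
   X x I onto T. *)
Section ndr_extension.
Context {R : realType} {B X Y : topologicalType} (pX : X -> B) (pY : Y -> B).
Local Notation I := (set_type (@unit_interval R)).
Context (A : set X) (phi : X -> R) (D : X -> I -> X).
Hypotheses (closedA : closed A) (ndr : fibrewise_NDR pX A phi D).
Context (g : X -> Y) (h : set_type A * I -> Y).
Hypotheses (cg : continuous g) (ch : continuous h)
  (gF : forall x, pY (g x) = pX x)
  (hF : forall a t, pY (h (a, t)) = pX (set_val a))
  (hg : forall a t, set_val t = 0 -> h (a, t) = g (set_val a)).

Definition in_T (q : X * I) : Prop := set_val q.2 = 0 \/ A q.1.

Definition glue_T (q : X * I) : Y :=
  match pselect (A q.1 /\ 0 < set_val q.2) with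
  | left hq => h (exist _ q.1 (mem_set (proj1 hq)), q.2)
  | right _ => g q.1
  end.

Lemma glue_T_h (a : set_type A) t : glue_T (set_val a, t) = h (a, t).
Proof.
rewrite /glue_T; case: pselect => [hq|nq].
  by congr (h (_, _)); apply: eq_sig_hprop => // *; exact: Prop_irrelevance.
have t0 : set_val t = 0.
  move: (unit_val_ge0 t); rewrite le_eqVlt => /orP [/eqP <- //|tpos].
  by exfalso; apply: nq; split => //; exact: set_valP.
by rewrite hg.
Qed.

Lemma glue_T_g x t : set_val t = 0 -> glue_T (x, t) = g x.
Proof.
move=> t0; rewrite /glue_T; case: pselect => [hq|] //.
by exfalso; case: hq => _; rewrite t0 ltxx.
Qed.

Lemma glue_T_cont q0 : in_T q0 -> forall N, nbhs (glue_T q0) N ->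
  \forall q \near q0, in_T q -> N (glue_T q).
Proof.
case: q0 => y0 s0 T0 N nN.
have [Ay|nAy] := pselect (A y0); last first.
  have s00 : set_val s0 = 0 by case: T0.
  rewrite glue_T_g // in nN.
  have nCg : nbhs y0 (~` A `&` g @^-1` N).
    apply: filterI; last exact: cg.
    by apply: open_nbhs_nbhs; split => //; exact: closed_openC.
  have nT : nbhs s0 [set: I] by apply: filterT.
  move: (nbhs_prod_of (y0, s0) nCg nT); apply: filterS => -[y s] /= [[nAy' gy] _] _.
  by rewrite /glue_T; case: pselect => // hq; exfalso; case: hq.
pose a0 : set_type A := exist _ y0 (mem_set Ay).
rewrite (glue_T_h a0) in nN.
case/nbhs_prod_rect: (ch (a0, s0) _ nN) => W1 [W2 [n1 n2 W12]].
case: (nbhs_subspace_open n1) => O [oO Oy OW1].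
have nO : nbhs y0 O by apply: open_nbhs_nbhs.
have [s00|s0pos] : set_val s0 = 0 \/ 0 < set_val s0.
  by move: (unit_val_ge0 s0); rewrite le_eqVlt => /orP [/eqP <-|->]; [left|right].
- have nOg : nbhs y0 (O `&` g @^-1` N).
    by apply: filterI => //; apply: cg; rewrite -(hg a0 s0 s00).
  move: (nbhs_prod_of (y0, s0) nOg n2); apply: filterS => -[y s] /= [[Oy' gy] Ws] _.
  by rewrite /glue_T; case: pselect => // hq; apply: W12 => //; exact: OW1.
- have npos : nbhs s0 (W2 `&` [set s : I | 0 < set_val s]).
    by apply: filterI => //; exact: (continuous_set_val _ s0 _ (lt_nbhsr s0pos)).
  move: (nbhs_prod_of (y0, s0) nO npos); apply: filterS => -[y s] /= [Oy' [Ws sp]] Tq.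
  rewrite /glue_T; case: pselect => [hq|nq]; first by apply: W12 => //; exact: OW1.
  by exfalso; case: Tq => [e|Ay']; [rewrite /= e ltxx in sp | exact: nq].
Qed.

Definition retract_T (p : X * I) : X * I :=
  (D p.1 p.2, clamp (set_val p.2 - phi p.1)).

Lemma retract_T_in p : in_T (retract_T p).
Proof.
rewrite /in_T /retract_T /=; case: ndr => _ [_ _ _ _ D_inA].
have [e|ne] := eqVneq (set_val (clamp (set_val p.2 - phi p.1))) 0; first by left.
right; apply: D_inA; rewrite -subr_gt0; apply: clamp_pos.
by rewrite lt_def ne unit_val_ge0.
Qed.

Lemma retract_T_cont : continuous retract_T.
Proof.
case: ndr => -[phi_cont _ _] [D_cont _ _ _ _] p.
apply: (continuous_pair_at (fun p : X * I => D p.1 p.2)); first exact: D_cont.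
apply: continuous_comp; last exact: continuous_clamp.
apply: cvgB.
  by apply: continuous_comp; [exact: continuous_snd | exact: continuous_set_val].
by apply: continuous_comp; [exact: continuous_fst | exact: phi_cont].
Qed.

Definition extension (p : X * I) : Y := glue_T (retract_T p).

Lemma extension_cont : continuous extension.
Proof.
move=> p N nN.
have nT : nbhs p [set q | in_T (retract_T q) -> N (glue_T (retract_T q))].
  exact: retract_T_cont p _ (glue_T_cont _ (retract_T_in p) _ nN).
by apply: filterS nT => q /= Tq; apply: Tq; exact: retract_T_in.
Qed.

Lemma extension_fib x t : pY (extension (x, t)) = pX x.
Proof.
case: ndr => _ [_ D_fib _ _ _].
by rewrite /extension /glue_T; case: pselect => [hq|_]; rewrite ?hF ?gF /= D_fib.
Qed.

Lemma extension_0 x t : set_val t = 0 -> extension (x, t) = g x.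
Proof.
case: ndr => -[_ phi_ge0 _] [_ _ D_0 _ _] t0.
rewrite /extension /retract_T /= D_0 // glue_T_g // t0 clamp_le0 //.
by rewrite sub0r oppr_le0.
Qed.

Lemma extension_A (a : set_type A) t : extension (set_val a, t) = h (a, t).
Proof.
case: ndr => -[_ _ phi_A] [_ _ _ D_A _].
rewrite /extension /retract_T /= D_A ?phi_A ?subr0 ?clamp_val ?glue_T_h //.
all: exact: set_valP.
Qed.

End ndr_extension.

Lemma fibrewise_NDR_cofibred_pair (R : realType) (B X : topologicalType)
    (pX : X -> B) (A : set X) (phi : X -> R)
    (D : X -> set_type (@unit_interval R) -> X) :
  closed A -> fibrewise_NDR pX A phi D -> closed_fibrewise_cofibred_pair R pX A.
Proof.
move=> closedA ndr; split; first exact: closed_embedding_set_val.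
split=> //; first exact: continuous_set_val.
move=> Y pY _ g h cg gF [ch hF] hg.
exists (extension A phi D g h); split.
- split.
    exact: (extension_cont _ _ _ _ closedA ndr _ _ cg ch hg).
  exact: (extension_fib _ _ _ _ _ ndr _ _ gF hF).
- exact: (extension_0 _ _ _ _ ndr).
- exact: (extension_A _ _ _ _ ndr _ _ hg).
Qed.

(* Write Z := X x_B X.  Extending the
   homotopy (x, t) |-> (Delta x, t) from the diagonal to all of Z, starting
   from z |-> (z, 0), inside the fibrewise space Z x 0 u Delta x I, yields
   maps lam : Z x I -> X x X and tau : Z x I -> R such that lam starts at the
   identity, fixes the diagonal, stays over the base point of z, and lands in
   the diagonal as soon as tau > 0, while tau (Delta x, t) = t. *)
Section diagonal_halo.
Context {R : realType} {B X : topologicalType} (pX : X -> B).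
Hypothesis cpX : continuous pX.
Local Notation I := (set_type (@unit_interval R)).
Local Notation Z := (set_type (fibprod pX)).

Lemma fibprodP (z : Z) : pX (set_val z).1 = pX (set_val z).2.
Proof. by case: z => [[x y] /= /set_mem]. Qed.

Lemma continuous_fib_diagonal : continuous (fib_diagonal pX).
Proof. by move=> x; apply: continuous_into_subspace => /=; apply: continuous_pair_at. Qed.

Definition halo_target : set (Z * I) :=
  [set p | set_val p.2 = 0 \/ (set_val p.1).1 = (set_val p.1).2].

Lemma diagonal_halo : fibrewise_LEC R pX ->
  exists (lam : Z -> I -> X * X) (tau : Z -> I -> R),
  [/\ continuous (fun p : Z * I => lam p.1 p.2),
      continuous (fun p : Z * I => tau p.1 p.2),
      (forall z t, 0 < tau z t -> (lam z t).1 = (lam z t).2),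
      (forall z t, pX (lam z t).1 = pX (set_val z).1 /\
                   pX (lam z t).2 = pX (set_val z).1) &
      [/\ (forall z t, set_val t = 0 -> lam z t = set_val z),
          (forall x t, lam (fib_diagonal pX x) t = (x, x)) &
          (forall x t, tau (fib_diagonal pX x) t = set_val t)]].
Proof.
case=> _ [_ _ hep].
pose Y := set_type halo_target.
pose pY (y : Y) : B := fibprod_proj (set_val y).1.
have cpY : continuous pY.
  move=> y; apply: (continuous_comp (f := fun y : Y => (set_val (set_val y).1).1));
    last exact: cpX.
  apply: continuous_comp; last exact: continuous_fst.
  apply: continuous_comp; last exact: continuous_set_val.
  by apply: continuous_comp; [exact: continuous_set_val | exact: continuous_fst].
have start_in z : (z, clamp 0) \in halo_target.
  by apply: mem_set; left; rewrite clamp_le0.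
pose start (z : Z) : Y := exist _ (z, clamp 0) (start_in z).
have diag_in p : (fib_diagonal pX p.1, p.2) \in halo_target by apply: mem_set; right.
pose diag_htpy (p : X * I) : Y := exist _ (fib_diagonal pX p.1, p.2) (diag_in p).
have cstart : continuous start.
  move=> z; apply: continuous_into_subspace => /=.
  by apply: continuous_pair_at; [exact: cvg_id | exact: cst_continuous].
have cdiag : continuous diag_htpy.
  move=> p; apply: continuous_into_subspace => /=.
  apply: continuous_pair_at; last exact: continuous_snd.
  by apply: continuous_comp; [exact: continuous_fst | exact: continuous_fib_diagonal].
have diag_start a t : set_val t = 0 -> diag_htpy (a, t) = start (fib_diagonal pX a).
  move=> t0; have -> : t = clamp 0 by apply: unit_val_inj; rewrite t0 clamp_le0.
  by apply: eq_sig_hprop.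
have [H [[cH fH] H0 Hdiag]] :=
  hep Y pY cpY start diag_htpy cstart (fun _ => erefl) (conj cdiag (fun _ _ => erefl))
    diag_start.
have cH' : continuous (fun p : Z * I => set_val (H (p.1, p.2))).
  move=> p; apply: continuous_comp; last exact: continuous_set_val.
  apply: (continuous_comp (f := fun p : Z * I => (p.1, p.2))); last exact: cH.
  by apply: continuous_pair_at; [exact: continuous_fst | exact: continuous_snd].
exists (fun z t => set_val (set_val (H (z, t))).1).
exists (fun z t => set_val (set_val (H (z, t))).2).
split.
- move=> p; apply: (continuous_comp (f := fun p : Z * I => (set_val (H (p.1, p.2))).1));
    last exact: continuous_set_val.
  by apply: continuous_comp; [exact: cH' | exact: continuous_fst].
- move=> p; apply: (continuous_comp (f := fun p : Z * I => (set_val (H (p.1, p.2))).2));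
    last exact: continuous_set_val.
  by apply: continuous_comp; [exact: cH' | exact: continuous_snd].
- move=> z t; case: (H (z, t)) => [[w s] hs] /=.
  by move/set_mem: hs => [->|->] //; rewrite ltxx.
- move=> z t; have e := fH z t; rewrite /pY /fibprod_proj /= in e.
  by split; [exact: e | rewrite -fibprodP; exact: e].
- split=> [z t t0|x t|x t]; first by rewrite H0.
  all: by rewrite Hdiag.
Qed.

End diagonal_halo.

(* Construction of a fibrewise NDR presentation of (X, A), A := f^-1 0, out
   of a fibrewise retraction r : V -> A, V := f^-1 [0,1[, and the diagonal
   halo (lam, tau).  For x in V the pair (x, r x) lies in X x_B X, so the halo
   provides a path from x to r x, running through the first coordinate of lam
   and back through the second; it is a genuine path as long as the level
   tau (x, r x) at time 1 is positive.  A cut-off [weight], equal to 1 on A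
   and supported where this level is positive and f < 1/2, controls both the
   NDR function [phi] and the speed at which D runs along these paths. *)
Section ndr_from_halo.
Context {R : realType} {B X : topologicalType} (pX : X -> B).
Local Notation I := (set_type (@unit_interval R)).
Local Notation Z := (set_type (fibprod pX)).
Context (f : X -> I).
Hypothesis cf : continuous f.
Local Notation A := [set x | set_val (f x) = 0].
Local Notation V := [set x | set_val (f x) < 1].
Context (r : set_type V -> set_type A).
Hypotheses (cr : continuous r)
  (rF : forall v, pX (set_val (r v)) = pX (set_val v))
  (rA : forall v, A (set_val v) -> set_val (r v) = set_val v).
Context (lam : Z -> I -> X * X) (tau : Z -> I -> R).
Hypotheses (clam : continuous (fun p : Z * I => lam p.1 p.2))
  (ctau : continuous (fun p : Z * I => tau p.1 p.2))
  (lam_diag : forall z t, 0 < tau z t -> (lam z t).1 = (lam z t).2)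
  (lam_fib : forall z t, pX (lam z t).1 = pX (set_val z).1 /\
                         pX (lam z t).2 = pX (set_val z).1)
  (lam0 : forall z t, set_val t = 0 -> lam z t = set_val z)
  (lam_Delta : forall x t, lam (fib_diagonal pX x) t = (x, x))
  (tau_Delta : forall x t, tau (fib_diagonal pX x) t = set_val t).

Definition fv (x : X) : R := set_val (f x).

Lemma continuous_fv : continuous fv.
Proof. by move=> x; apply: continuous_comp; [exact: cf | exact: continuous_set_val]. Qed.

Lemma openV : open V.
Proof.
have -> : V = fv @^-1` [set y | y < 1] by [].
by apply: open_comp; [move=> x _; exact: continuous_fv | exact: open_lt].
Qed.

Lemma closedA : closed A.
Proof.
have -> : A = fv @^-1` [set y | y = 0] by [].
by apply: preimage_closed; [move=> x _; exact: continuous_fv | exact: closed_eq].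
Qed.

Definition retr (x : X) : X :=
  match pselect (V x) with
  | left Vx => set_val (r (exist _ x (mem_set Vx)))
  | right _ => x
  end.

Lemma retr_fib x : pX (retr x) = pX x.
Proof. by rewrite /retr; case: pselect => // Vx; rewrite rF. Qed.

Lemma retr_in_A x : V x -> A (retr x).
Proof.
rewrite /retr; case: pselect => // Vx _.
by case: (r (exist _ x (mem_set Vx))) => y /= Ay; apply: set_mem.
Qed.

Lemma retr_id a : A a -> retr a = a.
Proof.
move=> Aa; rewrite /retr; case: pselect => [Va|]; first by rewrite rA.
by rewrite /= Aa ltr01.
Qed.

Lemma retr_cont x : V x -> {for x, continuous retr}.
Proof.
move=> Vx.
have : {within V, continuous retr}.
  apply/subspace_sigL_continuousP.
  have -> : sigL V retr = set_val \o r.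
    apply/funext => -[y Vy] /=; rewrite /sigL /= /retr.
    case: pselect => [Vy'|nV]; last by exfalso; apply: nV; apply: set_mem.
    by congr (set_val (r _)); apply: eq_sig_hprop.
  by move=> v; apply: continuous_comp; [exact: cr | exact: continuous_set_val].
rewrite continuous_open_subspace; last exact: openV.
by move=> /(_ x (mem_set Vx)).
Qed.

Definition to_Z (x : X) : Z :=
  exist _ (x, retr x) (mem_set (esym (retr_fib x) : fibprod pX (x, retr x))).

Lemma to_Z_cont x : V x -> {for x, continuous to_Z}.
Proof.
move=> Vx; apply: continuous_into_subspace => /=.
by apply: (continuous_pair_at id retr); [exact: cvg_id | exact: retr_cont].
Qed.

Lemma to_Z_A a : A a -> to_Z a = fib_diagonal pX a.
Proof.
move=> Aa; apply: eq_sig_hprop; first by move=> *; exact: Prop_irrelevance.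
by rewrite /= retr_id.
Qed.

Lemma lam_comp_cont {T : topologicalType} (z : T -> Z) (s : T -> I) x :
  {for x, continuous z} -> {for x, continuous s} ->
  {for x, continuous (fun y => lam (z y) (s y))}.
Proof.
move=> cz cs.
apply: (continuous_comp (f := fun y => (z y, s y)) (g := fun p : Z * I => lam p.1 p.2));
  last exact: clam.
exact: continuous_pair_at.
Qed.

Definition level (x : X) : R := tau (to_Z x) (clamp 1).

Lemma level_cont x : V x -> {for x, continuous level}.
Proof.
move=> Vx.
apply: (continuous_comp (f := fun y => (to_Z y, clamp 1)) (g := fun p : Z * I => tau p.1 p.2));
  last exact: ctau.
by apply: continuous_pair_at; [exact: to_Z_cont | exact: cst_continuous].
Qed.

Lemma level_A a : A a -> level a = 1.
Proof. by move=> Aa; rewrite /level to_Z_A // tau_Delta clampE // lexx ler01. Qed.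

Definition weight (x : X) : R := Num.max 0 (Num.min (level x) (1 - 2 * fv x)).

Lemma weight_le1 x : weight x <= 1.
Proof.
rewrite /weight ge_max ler01 /= ge_min; apply/orP; right.
by rewrite lerBlDr lerDl mulr_ge0 // unit_val_ge0.
Qed.

Lemma weight_pos x : 0 < weight x -> [/\ V x, 0 < level x & fv x < 1 / 2].
Proof.
rewrite /weight lt_max ltxx /= lt_min => /andP [lpos fpos].
have f_lt : fv x < 1 / 2 by rewrite subr_gt0 -ltr_pdivlMl // mulrC in fpos.
by split => //; apply: (lt_trans f_lt); rewrite ltr_pdivrMr // mul1r ltr1n.
Qed.

Lemma weight_A a : A a -> weight a = 1.
Proof.
move=> Aa; rewrite /weight level_A // [fv a]Aa.
by rewrite mulr0 subr0 minxx (max_idPr ler01).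
Qed.

(* weight is continuous: on V by construction, and it vanishes near any
   point outside V, where f = 1. *)
Lemma weight_cont : continuous weight.
Proof.
move=> x; have [Vx|nVx] := pselect (V x).
  apply: (continuous_max (f := fun _ => 0)
    (g := fun y => Num.min (level y) (1 - 2 * fv y))); first exact: cst_continuous.
  apply: continuous_min; first exact: level_cont.
  by apply: cvgB; [exact: cvg_cst | apply: cvgM; [exact: cvg_cst | exact: continuous_fv]].
have fx1 : 1 / 2 < fv x.
  have -> : fv x = 1 by apply/eqP; rewrite eq_le unit_val_le1 leNgt; apply/negP.
  by rewrite ltr_pdivrMr // mul1r ltr1n.
apply: (continuous_at_near_eq (fun _ => 0)); last exact: cst_continuous.
have f_gt : \forall y \near x, 1 / 2 < fv y := continuous_fv x _ (lt_nbhsr fx1).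
apply: filterS f_gt => y fy.
apply/max_idPl; rewrite ge_min; apply/orP; right.
by rewrite subr_le0 -ler_pdivrMl // mulrC ltW.
Qed.

Definition phi (x : X) : R := Num.min 1 (fv x + 2 * (1 - weight x)).

Lemma phi_ge0 x : 0 <= phi x.
Proof.
rewrite /phi le_min ler01 /= addr_ge0 ?unit_val_ge0 //.
by rewrite mulr_ge0 // subr_ge0 weight_le1.
Qed.

Lemma phi_A a : A a -> phi a = 0.
Proof.
move=> Aa; rewrite /phi weight_A // [fv a]Aa.
by rewrite subrr mulr0 addr0 (min_idPr ler01).
Qed.

Lemma phi_pos x : ~ A x -> 0 < phi x.
Proof.
move=> nA; have fpos : 0 < fv x.
  by rewrite lt_def unit_val_ge0 andbT; apply/eqP => e; apply: nA.
rewrite /phi lt_min ltr01 /=; apply: (lt_le_trans fpos).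
by rewrite lerDl mulr_ge0 // subr_ge0 weight_le1.
Qed.

Lemma phi_lt1 x : phi x < 1 -> 1 / 2 < weight x.
Proof.
rewrite /phi gt_min ltxx /= => lt1.
have : 2 * (1 - weight x) < 1 by apply: le_lt_trans lt1; rewrite lerDr unit_val_ge0.
by move=> ?; lra.
Qed.

Lemma phi_cont : continuous phi.
Proof.
move=> x; apply: (continuous_min (f := fun _ => 1)
  (g := fun y => fv y + 2 * (1 - weight y))); first exact: cvg_cst.
apply: cvgD; first exact: continuous_fv.
apply: cvgM; first exact: cvg_cst.
by apply: cvgB; [exact: cvg_cst | exact: weight_cont].
Qed.

Definition cutoff (x : X) : R := clampR (4 * weight x - 1).

Lemma cutoff_cont : continuous cutoff.
Proof.
move=> x; apply: (continuous_comp (f := fun y => 4 * weight y - 1));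
  last exact: continuous_clampR.
apply: cvgB; last exact: cvg_cst.
by apply: cvgM; [exact: cvg_cst | exact: weight_cont].
Qed.

Lemma cutoff1 x : 1 / 2 < weight x -> cutoff x = 1.
Proof. by move=> h; apply: (@clamp_ge1 R); lra. Qed.

Lemma cutoff0 x : weight x <= 1 / 4 -> cutoff x = 0.
Proof. by move=> h; apply: (@clamp_le0 R); lra. Qed.

(* Time along the path from x to retr x reached by D x at time t: it is 0 at
   t = 0 or where the cut-off vanishes, and 1 once t > phi x. *)
Definition speed (x : X) (t : I) : I :=
  clamp (Num.min 1 (set_val t / phi x) * cutoff x).

Lemma speed0 x t : set_val t = 0 -> set_val (speed x t) = 0.
Proof. by move=> t0; rewrite /speed t0 mul0r (min_idPr ler01) mul0r clamp_le0. Qed.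

Lemma speed1 x t : ~ A x -> phi x < set_val t -> set_val (speed x t) = 1.
Proof.
move=> nA lt; have p1 : phi x < 1 by apply: (lt_le_trans lt); exact: unit_val_le1.
rewrite /speed cutoff1 ?phi_lt1 // mulr1 (min_idPl _) ?clamp_ge1 //.
by rewrite ler_pdivlMr ?phi_pos // mul1r ltW.
Qed.

Lemma speed_small x t : weight x <= 1 / 4 -> set_val (speed x t) = 0.
Proof. by move=> h; rewrite /speed cutoff0 // mulr0 clamp_le0. Qed.

Lemma speed_cont x t : ~ A x ->
  {for (x, t), continuous (fun p : X * I => speed p.1 p.2)}.
Proof.
move=> nA; apply: continuous_comp; last exact: continuous_clamp.
have cphi1 : {for (x, t), continuous (fun p : X * I => phi p.1)}.
  by apply: continuous_comp; [exact: continuous_fst | exact: phi_cont].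
apply: cvgM; last first.
  by apply: continuous_comp; [exact: continuous_fst | exact: cutoff_cont].
apply: (continuous_min (f := fun _ => 1)
  (g := fun p : X * I => set_val p.2 / phi p.1)); first exact: cvg_cst.
apply: cvgM.
  by apply: continuous_comp; [exact: continuous_snd | exact: continuous_set_val].
by apply: cvgV; [rewrite gt_eqF ?phi_pos | exact: cphi1].
Qed.

Definition retr_path (x : X) (s : I) : X :=
  if set_val s <= 1 / 2 then (lam (to_Z x) (clamp (2 * set_val s))).1
  else (lam (to_Z x) (clamp (2 - 2 * set_val s))).2.

Lemma retr_path0 x s : set_val s = 0 -> retr_path x s = x.
Proof.
move=> s0; rewrite /retr_path s0 ifT; last by rewrite divr_ge0 // ler01.
by rewrite mulr0 lam0 // clamp_le0.
Qed.

Lemma retr_path1 x s : set_val s = 1 -> retr_path x s = retr x.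
Proof.
move=> s1; rewrite /retr_path s1 ifF; last first.
  by apply/negbTE; rewrite -ltNge ltr_pdivrMr // mul1r ltr1n.
by rewrite mulr1 subrr lam0 // clamp_le0.
Qed.

Lemma retr_path_A a s : A a -> retr_path a s = a.
Proof. by move=> Aa; rewrite /retr_path to_Z_A //; case: ifP => _; rewrite lam_Delta. Qed.

Lemma retr_path_fib x s : pX (retr_path x s) = pX x.
Proof.
rewrite /retr_path; case: ifP => _; first by case: (lam_fib (to_Z x) (clamp (2 * set_val s))).
by case: (lam_fib (to_Z x) (clamp (2 - 2 * set_val s))).
Qed.

(* The two halves meet at s = 1/2 because the level there is positive. *)
Lemma retr_path_cont x s : V x -> 0 < level x ->
  {for (x, s), continuous (fun p : X * I => retr_path p.1 p.2)}.
Proof.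
move=> Vx lx.
have cz : {for (x, s), continuous (fun p : X * I => to_Z p.1)}.
  by apply: continuous_comp; [exact: continuous_fst | exact: to_Z_cont].
have cs : {for (x, s), continuous (fun p : X * I => set_val p.2)}.
  by apply: continuous_comp; [exact: continuous_snd | exact: continuous_set_val].
apply: (continuous_at_if_le (fun p : X * I => set_val p.2)) => //.
- apply: (continuous_comp (f := fun p : X * I => lam (to_Z p.1) (clamp (2 * set_val p.2))));
    last exact: continuous_fst.
  apply: lam_comp_cont => //; apply: continuous_comp; last exact: continuous_clamp.
  by apply: cvgM; [exact: cvg_cst | exact: cs].
- apply: (continuous_comp (f := fun p : X * I => lam (to_Z p.1) (clamp (2 - 2 * set_val p.2))));
    last exact: continuous_snd.
  apply: lam_comp_cont => //; apply: continuous_comp; last exact: continuous_clamp.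
  by apply: cvgB; [exact: cvg_cst | apply: cvgM; [exact: cvg_cst | exact: cs]].
- move=> /= ->.
  have [-> ->] : 2 * (1 / 2) = 1 :> R /\ 2 - 1 = 1 :> R by split; lra.
  exact: lam_diag.
Qed.

Definition D (x : X) (t : I) : X := retr_path x (speed x t).

Lemma D_inA x t : phi x < set_val t -> A (D x t).
Proof.
move=> lt; have [Ax|nA] := pselect (A x); first by rewrite /D retr_path_A.
have p1 : phi x < 1 by apply: (lt_le_trans lt); exact: unit_val_le1.
have [Vx _ _] : [/\ V x, 0 < level x & fv x < 1 / 2].
  by apply: weight_pos; apply: lt_trans (phi_lt1 _ p1); rewrite divr_gt0.
by rewrite /D retr_path1 ?speed1 //; apply: retr_in_A.
Qed.

(* Continuity of D: near A by the tube lemma, where weight < 1/4 because D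
   is locally the identity, and elsewhere as a composite. *)
Lemma D_cont : continuous (fun p : X * I => D p.1 p.2).
Proof.
case=> x t.
have [Ax|nA] := pselect (A x).
  have Vx : V x by rewrite /= Ax ltr01.
  have lx : 0 < level x by rewrite level_A.
  move=> N; rewrite /= /D retr_path_A // => nN.
  have tube := tube_lemma retr_path x x (fun s => retr_path_A x s Ax)
    (fun s => retr_path_cont x s Vx lx) N nN.
  have near_x : nbhs (x, t) [set p : X * I | forall s, N (retr_path p.1 s)].
    exact: continuous_fst (x, t) _ tube.
  by apply: (filterS (F := nbhs (x, t))) near_x => -[y s] /=; apply.
have [small|big] := ltP (weight x) (1 / 4).
  apply: (continuous_at_near_eq fst); last exact: continuous_fst.
  have near_x : nbhs (x, t) [set p : X * I | weight p.1 < 1 / 4].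
    exact: continuous_fst (x, t) _ (weight_cont x _ (lt_nbhsl small)).
  apply: (filterS (F := nbhs (x, t))) near_x => -[y s] /= lt.
  by rewrite /D retr_path0 // speed_small // ltW.
have [Vx lx _] : [/\ V x, 0 < level x & fv x < 1 / 2].
  by apply: weight_pos; apply: lt_le_trans big; rewrite divr_gt0.
apply: (continuous_comp (f := fun p : X * I => (p.1, speed p.1 p.2))
  (g := fun p : X * I => retr_path p.1 p.2)); last exact: retr_path_cont.
by apply: continuous_pair_at; [exact: continuous_fst | exact: speed_cont].
Qed.

Lemma halo_NDR : fibrewise_NDR pX A phi D.
Proof.
split; split.
- exact: phi_cont.
- exact: phi_ge0.
- exact: phi_A.
- exact: D_cont.
- by move=> x t; exact: retr_path_fib.
- by move=> x t t0; rewrite /D retr_path0 // speed0.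
- by move=> a t Aa; rewrite /D retr_path_A.
- exact: D_inA.
Qed.

End ndr_from_halo.

Lemma LEC_retract_NDR {R : realType} {B X : topologicalType} {pX : X -> B}
    {f : X -> set_type (@unit_interval R)} :
  continuous pX -> fibrewise_LEC R pX -> continuous f ->
  fibrewise_retract pX [set x | set_val (f x) = 0] [set x | set_val (f x) < 1] ->
  exists (phi : X -> R) (D : X -> set_type (@unit_interval R) -> X),
    fibrewise_NDR pX [set x | set_val (f x) = 0] phi D.
Proof.
move=> cpX hLEC cf [_ [r [cr rF rA]]].
have [lam [tau [clam ctau lam_diag lam_fib [lam0 lam_Delta tau_Delta]]]] :=
  diagonal_halo pX cpX hLEC.
do 2 eexists.
exact: (halo_NDR pX f cf r cr rF rA lam tau clam ctau lam_diag lam_fib lam0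
  lam_Delta tau_Delta).
Qed.

Theorem proposition4p6 (R : realType) (B X : topologicalType) (pX : X -> B)
  (cpX : continuous pX) (hLEC : fibrewise_LEC R pX)
  (f : X -> set_type (@unit_interval R)) (cf : continuous f)
  (hret : fibrewise_retract pX [set x | set_val (f x) = 0]
                               [set x | set_val (f x) < 1]) :
  closed_fibrewise_cofibred_pair R pX [set x | set_val (f x) = 0].
Proof.
have [phi [D ndr]] := LEC_retract_NDR cpX hLEC cf hret.
exact: fibrewise_NDR_cofibred_pair (closedA _ cf) ndr.
Qed.
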